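(* Let $\gamma=(\alpha,\beta)\in\mathbb N_0^{2n}$ with $\alpha\ge\beta$, let $\sigma\in\{+,-\}$ with $\alpha>\beta$ if $\sigma=-$, and assume $g_\sigma^\gamma\in\hat A_n^\perp$. Let $y_\pm^{(\ell)}$ be the Commutator Chain of Type II generated by $g_+^\gamma,g_-^\gamma$. Then for all $\ell\ge0$, $$\deg(y_\sigma^{(\ell)})=3^\ell(|\gamma|-2)+2\ge 3^\ell+2 .$$
   Context: Fix $n\ge 1$. The Weyl algebra $A_n$ is the unital associative $\mathbb{C}$-algebra generated by $a_1,\dots,a_n,a_1^\dagger,\dots,a_n^\dagger$ subject to $[a_i,a_j^\dagger]=\delta_{ij}$ and $[a_i,a_j]=[a_i^\dagger,a_j^\dagger]=0$. For $\gamma=(\alpha,\beta)\in\mathbb N_0^{2n}$ set $a^{\gamma}=(a_1^\dagger)^{\alpha_1}\cdots(a_n^\dagger)^{\alpha_n}a_1^{\beta_1}\cdots a_n^{\beta_n}$; these form a $\mathbb C$-basis of $A_n$; $|\gamma|=\sum_j\alpha_j+\sum_j\beta_j$. For $0\neq g\in A_n$, $\deg(g)$ is the largest $|\gamma|$ such that $a^\gamma$ has nonzero coefficient in the expansion of $g$; $\deg(0)=-\infty$. The adjoint $\dagger$ is the conjugate-linear anti-automorphism with $(a_j)^\dagger=a_j^\dagger$, $(a_j^\dagger)^\dagger=a_j$, $1^\dagger=1$. The skew-hermitian Weyl algebra is $\hat A_n=\{g\in A_n: g^\dagger=-g\}$. Let $g_+^\gamma=i((a^\gamma)^\dagger+a^\gamma)$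 and $g_-^\gamma=(a^\gamma)^\dagger-a^\gamma$. With lexicographic order on $\mathbb N_0^n$, a basis element is $g_+^{(\alpha,\beta)}$ with $\alpha\ge\beta$ or $g_-^{(\alpha,\beta)}$ with $\alpha>\beta$; these form an $\mathbb R$-basis of $\hat A_n$. Subspaces of $\hat A_n$ (real spans of basis elements $g_\sigma^{\gamma}$, $\gamma=(\alpha,\beta)$): $\hat A_n^0$ is spanned by $2i$ and $2ia_k^\dagger a_k$ ($1\le k\le n$), i.e. the basis elements with $\alpha=\beta$, $|\gamma|\in\{0,2\}$; $\hat A_n^1$ by basis elements with $|\gamma|=1$; $\hat A_n^2$ by basis elements with $|\gamma|=2$ and $\alpha\ne\beta$; $\hat A_n^=$ by basis elements with $\alpha=\beta$ and $|\gamma|\ge 4$; $\hat A_n^{\mathrm{om}}$ by basis elements with $|\gamma|\ge3$ for which there is a unique index $k$ with $\alpha_k+\beta_k=1$ and $\alpha_j=\beta_j$ for all $j\neq k$; $\hat A_n^\perp$ by all remaining basis elements. Commutator Chain of Type II generated by $g_+^\gamma,g_-^\gamma$: $y_\sigma^{(0)}=g_\sigma^\gamma$ for $\sigma\in\{+,-\}$, and $y_\sigma^{(\ell+1)}=[y_\sigma^{(\ell)},[y_+^{(\ell)},y_-^{(\ell)}]]$ for $\ell\ge0$. *)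

(* Weyl algebra A_n realised on its normal-ordered basis,
   using multinomials' {mpoly C[n + n]} as the underlying vector space. *)
From HB Require Import structures.
From mathcomp Require Import all_boot all_order all_algebra.
From mathcomp Require Import mpoly.
Set Implicit Arguments. Unset Strict Implicit. Unset Printing Implicit Defensive.
Import Order.TTheory GRing.Theory Num.Theory.
Local Open Scope ring_scope.

Section Weyl.
Variables (C : numClosedFieldType) (n : nat).

(* Elements of A_n: C-linear combinations of the normal-ordered monomials
   a^gamma = (a^dagger)^alpha a^beta, gamma = (alpha, beta) in N_0^(2n).
   Variable i (i < n) of the mpoly carries alpha_i, variable n + i carries beta_i. *)
Definition WA := {mpoly C[n + n]}.

Definition mk (a b : 'I_n -> nat) : 'X_{1..n + n} :=
  [multinom (match split i with inl j => a j | inr j => b j end) | i < n + n].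

Definition alpha_of (m : 'X_{1..n + n}) (j : 'I_n) : nat := m (lshift n j).
Definition beta_of (m : 'X_{1..n + n}) (j : 'I_n) : nat := m (rshift n j).

Definition aX (a b : 'I_n -> nat) : WA := 'X_[mk a b].

(* Product of two normal-ordered monomials (Weyl normal-ordering formula,
   from [a_i, a_j^dagger] = delta_ij and the other commutators vanishing):
   a^(al,be) a^(al',be') =
     sum_k prod_j C(be_j,k_j) C(al'_j,k_j) k_j! a^(al+al'-k, be+be'-k). *)
Definition wmulX (m1 m2 : 'X_{1..n + n}) : WA :=
  \sum_(k : {ffun 'I_n -> 'I_(mdeg m1).+1})
     ((\prod_(j < n) ('C(beta_of m1 j, k j) * 'C(alpha_of m2 j, k j) * (k j)`!))%N)%:R
     *: aX (fun j => alpha_of m1 j + alpha_of m2 j - k j)%N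
           (fun j => beta_of m1 j + beta_of m2 j - k j)%N.

Definition wmul (p q : WA) : WA :=
  \sum_(m1 <- msupp p) \sum_(m2 <- msupp q) (p@_m1 * q@_m2) *: wmulX m1 m2.

Definition wcomm (p q : WA) : WA := wmul p q - wmul q p.

Definition dagger (p : WA) : WA :=
  \sum_(m <- msupp p) (p@_m)^* *: aX (beta_of m) (alpha_of m).

(* deg, with None standing for -infinity (deg 0) *)
Definition wdeg (p : WA) : option nat :=
  if p == 0 then None else Some (msize p).-1.

(* g_+^gamma (sigma = true) and g_-^gamma (sigma = false) *)
Definition gpm (sigma : bool) (a b : 'I_n -> nat) : WA :=
  if sigma then 'i *: (dagger (aX a b) + aX a b)
  else dagger (aX a b) - aX a b.

Fixpoint chain2 (gp gm : WA) (l : nat) : WA * WA :=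
  match l with
  | 0 => (gp, gm)
  | l'.+1 => let: (yp, ym) := chain2 gp gm l' in
             let c := wcomm yp ym in (wcomm yp c, wcomm ym c)
  end.

Definition ychain (a b : 'I_n -> nat) (sigma : bool) (l : nat) : WA :=
  let y := chain2 (gpm true a b) (gpm false a b) l in
  if sigma then y.1 else y.2.

End Weyl.

Definition gsize (n : nat) (a b : 'I_n -> nat) : nat := (\sum_(j < n) (a j + b j))%N.

Definition lexgt (n : nat) (a b : 'I_n -> nat) : Prop :=
  exists k : 'I_n, (forall j : 'I_n, (j < k)%N -> a j = b j) /\ (b k < a k)%N.
Definition lexge (n : nat) (a b : 'I_n -> nat) : Prop :=
  (forall j, a j = b j) \/ lexgt a b.

Definition diag_idx (n : nat) (a b : 'I_n -> nat) : Prop := forall j, a j = b j.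
Definition in_A0 n (a b : 'I_n -> nat) : Prop :=
  diag_idx a b /\ (gsize a b = 0%N \/ gsize a b = 2%N).
Definition in_A1 n (a b : 'I_n -> nat) : Prop := gsize a b = 1%N.
Definition in_A2 n (a b : 'I_n -> nat) : Prop := gsize a b = 2%N /\ ~ diag_idx a b.
Definition in_Aeq n (a b : 'I_n -> nat) : Prop := diag_idx a b /\ (4 <= gsize a b)%N.
Definition om_at n (a b : 'I_n -> nat) (k : 'I_n) : Prop :=
  (a k + b k = 1)%N /\ (forall j, j != k -> a j = b j).
Definition in_Aom n (a b : 'I_n -> nat) : Prop :=
  (3 <= gsize a b)%N /\ exists k, om_at a b k /\ forall k', om_at a b k' -> k' = k.
Definition in_Aperp n (a b : 'I_n -> nat) : Prop :=
  ~ in_A0 a b /\ ~ in_A1 a b /\ ~ in_A2 a b /\ ~ in_Aeq a b /\ ~ in_Aom a b.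

(* If the top-degree components of [p] and [q] have degrees [d1]
   and [d2], the commutator [p q - q p] agrees, up to degree [< d1 + d2 - 2],
   with the Poisson bracket of these components: the single-contraction terms
   of the normal-ordering formula lower the degree by 2, the others by at least
   4.  So as long as the top components of the chain do not vanish, their
   degree obeys [D' = 3 D - 4], i.e. [D_l = 3^l (|gamma| - 2) + 2].
   Writing [g_+ = i (V + U)] and [g_- = V - U] with [U = a^gamma] and [V] its
   adjoint, the Poisson chain is carried by two elements of opposite charges
   [alpha - beta] (charges add under the bracket), hence of disjoint supports,
   and it suffices that the [U]-part never vanishes.  For this, substitute
   [1 + (alpha_j - beta_j) t] for [a_j^dagger] and [1] for [a_j]: on elements of
   charge proportional to [alpha - beta] the bracket becomes a Wronskian-like
   bracket of polynomials, and the images [u], [v] evolve by [u |-> - u w'],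
   [v |-> v w'] with [w = c (u v)'], which keeps [deg (u v) >= 2].  Membership
   in [\hat A_n^perp] is exactly what gives [|gamma| >= 3] and the initial
   [deg (u v) = sum_{alpha_j <> beta_j} (alpha_j + beta_j) >= 2]. *)

From HB Require Import structures.
From mathcomp Require Import all_boot all_order all_algebra.
From mathcomp Require Import mpoly ssrcomplements bigenough zify ring.
Set Implicit Arguments. Unset Strict Implicit. Unset Printing Implicit Defensive.
Import Order.TTheory GRing.Theory Num.Theory BigEnough.
Local Open Scope ring_scope.

Section LinearExtension.
Variables (R : comNzRingType) (k : nat) (V : lmodType R).
Implicit Types (p q : {mpoly R[k]}) (G : 'X_{1..k} -> V).

Definition mlin G p : V := \sum_(m <- msupp p) p@_m *: G m.

Lemma mlinE G p w : (msize p <= w)%N ->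
  mlin G p = \sum_(m : 'X_{1..k < w}) p@_m *: G m.
Proof.
move=> le_pw; pose I : subFinType _ := 'X_{1..k < w}.
rewrite /mlin (big_mksub I) //=; first last.
- by move=> x /msize_mdeg_lt /leq_trans; apply.
- by rewrite msupp_uniq.
by rewrite big_rmcond //= => i /memN_msupp_eq0 ->; rewrite scale0r.
Qed.

Lemma mlinD G p q : mlin G (p + q) = mlin G p + mlin G q.
Proof.
pose_big_enough w.
  by rewrite !(mlinE G _ (w := w)) // -big_split; apply: eq_bigr => m _; rewrite mcoeffD scalerDl.
by close.
Qed.

Lemma mlinZ G c p : mlin G (c *: p) = c *: mlin G p.
Proof.
pose_big_enough w.
  rewrite !(mlinE G _ (w := w)) // scaler_sumr; apply: eq_bigr => m _.
  by rewrite mcoeffZ scalerA.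
by close.
Qed.

Lemma mlin0 G : mlin G 0 = 0.
Proof. by rewrite /mlin msupp0 big_nil. Qed.

Lemma mlinN G p : mlin G (- p) = - mlin G p.
Proof. by rewrite -[- p]scaleN1r mlinZ scaleN1r. Qed.

Lemma mlinX G m : mlin G 'X_[m] = G m.
Proof. by rewrite /mlin msuppX big_seq1 mcoeffX eqxx scale1r. Qed.

Lemma eq_mlin G1 G2 p : {in msupp p, G1 =1 G2} -> mlin G1 p = mlin G2 p.
Proof.
by move=> eqG; rewrite /mlin !big_seq; apply: eq_bigr => m /eqG ->.
Qed.

Lemma mlinFD G1 G2 p : mlin (fun m => G1 m + G2 m) p = mlin G1 p + mlin G2 p.
Proof. by rewrite /mlin -big_split; apply: eq_bigr => m _; rewrite scalerDr. Qed.

Lemma mlinFZ G c p : mlin (fun m => c *: G m) p = c *: mlin G p.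
Proof. by rewrite /mlin scaler_sumr; apply: eq_bigr => m _; rewrite !scalerA mulrC. Qed.

Lemma mlinFN G p : mlin (fun m => - G m) p = - mlin G p.
Proof. by rewrite /mlin -sumrN; apply: eq_bigr => m _; rewrite scalerN. Qed.

Lemma mlinFB G1 G2 p : mlin (fun m => G1 m - G2 m) p = mlin G1 p - mlin G2 p.
Proof. by rewrite /mlin -sumrB; apply: eq_bigr => m _; rewrite scalerBr. Qed.

Lemma mlin_sum I (r : seq I) (P : pred I) (F : I -> {mpoly R[k]}) G :
  mlin G (\sum_(i <- r | P i) F i) = \sum_(i <- r | P i) mlin G (F i).
Proof. exact: (big_morph (mlin G) (mlinD G) (mlin0 G)). Qed.

End LinearExtension.

Lemma mlin_morph (R : comNzRingType) k (V W : lmodType R) (f : V -> W)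
    (G : 'X_{1..k} -> V) (p : {mpoly R[k]}) :
  {morph f : x y / x + y} -> (forall c x, f (c *: x) = c *: f x) ->
  f (mlin G p) = mlin (fun m => f (G m)) p.
Proof.
move=> fD fZ; have f0 : f 0 = 0 by rewrite -(scale0r 0) fZ scale0r.
by rewrite /mlin (big_morph f fD f0); apply: eq_bigr => m _; rewrite fZ.
Qed.

Section BilinearExtension.
Variables (R : comNzRingType) (k : nat) (V : lmodType R).
Implicit Types (p q : {mpoly R[k]}) (F : 'X_{1..k} -> 'X_{1..k} -> V).

Definition mbil F p q : V := mlin (fun m1 => mlin (F m1) q) p.

Lemma mbilDl F p1 p2 q : mbil F (p1 + p2) q = mbil F p1 q + mbil F p2 q.
Proof. exact: mlinD. Qed.

Lemma mbilDr F p q1 q2 : mbil F p (q1 + q2) = mbil F p q1 + mbil F p q2.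
Proof. by rewrite /mbil -mlinFD; apply: eq_mlin => m _; rewrite mlinD. Qed.

Lemma mbilZl F c p q : mbil F (c *: p) q = c *: mbil F p q.
Proof. exact: mlinZ. Qed.

Lemma mbilZr F c p q : mbil F p (c *: q) = c *: mbil F p q.
Proof. by rewrite /mbil -mlinFZ; apply: eq_mlin => m _; rewrite mlinZ. Qed.

Lemma mbilNl F p q : mbil F (- p) q = - mbil F p q.
Proof. exact: mlinN. Qed.

Lemma mbilNr F p q : mbil F p (- q) = - mbil F p q.
Proof. by rewrite -[- q]scaleN1r mbilZr scaleN1r. Qed.

Lemma mbilFN F p q : mbil (fun a b => - F a b) p q = - mbil F p q.
Proof. by rewrite /mbil -mlinFN; apply: eq_mlin => m _; rewrite mlinFN. Qed.

Lemma mbilFB F1 F2 p q :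
  mbil (fun a b => F1 a b - F2 a b) p q = mbil F1 p q - mbil F2 p q.
Proof. by rewrite /mbil -mlinFB; apply: eq_mlin => m _; rewrite mlinFB. Qed.

Lemma mbilC F p q : mbil F q p = mbil (fun a b => F b a) p q.
Proof.
rewrite /mbil /mlin.
under eq_bigr do rewrite scaler_sumr.
under [RHS]eq_bigr do rewrite scaler_sumr.
rewrite exchange_big /=; apply: eq_bigr => m1 _; apply: eq_bigr => m2 _.
by rewrite !scalerA mulrC.
Qed.

Lemma eq_mbil F1 F2 p q : (forall a b, F1 a b = F2 a b) -> mbil F1 p q = mbil F2 p q.
Proof. by move=> eqF; apply: eq_mlin => m _; apply: eq_mlin => m' _; apply: eqF. Qed.

End BilinearExtension.

Section MonomialPredicates.
Variables (R : nzRingType) (k : nat).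
Implicit Types (P : pred 'X_{1..k}) (p q : {mpoly R[k]}).

Definition allm P p := {in msupp p, forall m, P m}.

Lemma allm0 P : allm P 0.
Proof. by move=> m; rewrite msupp0. Qed.

Lemma allmD P p q : allm P p -> allm P q -> allm P (p + q).
Proof. by move=> hp hq m /msuppD_le; rewrite mem_cat => /orP[/hp|/hq]. Qed.

Lemma allmN P p : allm P p -> allm P (- p).
Proof. by move=> hp m; rewrite (perm_mem (msuppN p)) => /hp. Qed.

Lemma allmB P p q : allm P p -> allm P q -> allm P (p - q).
Proof. by move=> hp hq; apply/allmD/allmN. Qed.

Lemma allmZ P (c : R) p : allm P p -> allm P (c *: p).
Proof. by move=> hp m /msuppZ_le /hp. Qed.

Lemma allm_sum P I (r : seq I) (Q : pred I) (F : I -> {mpoly R[k]}) :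
  (forall i, Q i -> allm P (F i)) -> allm P (\sum_(i <- r | Q i) F i).
Proof.
move=> hF; elim/big_rec: _ => [|i p Qi hp]; first exact: allm0.
exact/allmD/hp/hF.
Qed.

End MonomialPredicates.

Lemma allm_mbil (R : comNzRingType) k (P : pred 'X_{1..k})
    (F : 'X_{1..k} -> 'X_{1..k} -> {mpoly R[k]}) p q :
  (forall m1 m2, m1 \in msupp p -> m2 \in msupp q -> allm P (F m1 m2)) ->
  allm P (mbil F p q).
Proof.
move=> hF; rewrite /mbil /mlin big_seq_cond; apply: allm_sum => m1 /andP[p_m1 _].
rewrite big_seq_cond; apply/allmZ/allm_sum => m2 /andP[q_m2 _].
exact/allmZ/hF.
Qed.

Lemma big_ord_trunc (V : nmodType) N b (F : nat -> V) :
  (b < N)%N -> (forall i, (b < i)%N -> F i = 0) ->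
  \sum_(i < N) F i = \sum_(i < b.+1) F i.
Proof.
move=> lt_bN F0; rewrite [RHS](big_ord_widen _ _ lt_bN).
rewrite [LHS](bigID (fun i : 'I_N => (i < b.+1)%N)) /=.
by rewrite [X in _ + X]big1 ?addr0 // => i; rewrite -leqNgt => /F0.
Qed.

Section UnitMultiIndex.
Variables (n K : nat).
Local Notation idx := {ffun 'I_n -> 'I_K.+2}.

Definition ffsum (k : idx) : nat := (\sum_(j < n) (k j : nat))%N.
Definition ffdelta (j : 'I_n) : idx := [ffun i => inord (i == j)].

Lemma ffdeltaE j i : (ffdelta j i : nat) = (i == j).
Proof. by rewrite ffunE inordK // ltnS; case: (i == j). Qed.

Lemma ffsum_delta j : ffsum (ffdelta j) = 1%N.
Proof.
rewrite /ffsum (bigD1 j) //= ffdeltaE eqxx big1 // => i ne_ij.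
by rewrite ffdeltaE (negbTE ne_ij).
Qed.

Lemma ffsum1P (k : idx) : ffsum k = 1%N -> exists j, k = ffdelta j.
Proof.
move=> k1; have [j kj] : exists j, (k j : nat) != 0%N.
  apply/existsP; apply: contraT; rewrite negb_exists => /forallP k0.
  by move: k1; rewrite /ffsum big1 // => i _; apply/eqP; move: (k0 i); rewrite negbK.
exists j; apply/ffunP => i; apply/val_inj; rewrite /= ffdeltaE.
move: k1; rewrite /ffsum (bigD1 j) //=; set r := (\sum_(_ < _ | _) _)%N => k1.
have r0 : r = 0%N by move: k1 kj; rewrite -lt0n; lia.
case: (eqVneq i j) => [->|ne_ij]; first by lia.
by move/eqP: r0; rewrite sum_nat_eq0 => /forallP /(_ i); rewrite ne_ij => /eqP.
Qed.

Lemma ffdelta_inj : injective ffdelta.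
Proof.
move=> i j /(congr1 (fun k : idx => (k i : nat))).
by rewrite /= !ffdeltaE eqxx; case: eqP.
Qed.

Lemma sum_ffsum1 (V : nmodType) (f : idx -> V) :
  \sum_(k | ffsum k == 1%N) f k = \sum_(j < n) f (ffdelta j).
Proof.
rewrite [RHS](eq_bigr (fun j => \sum_k (if k == ffdelta j then f k else 0))); last first.
  by move=> j _; rewrite -big_mkcond big_pred1_eq.
rewrite [RHS]exchange_big /= [LHS]big_mkcond /=; apply: eq_bigr => k _.
case: ifP => [/eqP /ffsum1P [j0 ->]|k1].
  rewrite (bigD1 j0) //= eqxx big1 ?addr0 // => j ne_jj0.
  by case: eqP => // /ffdelta_inj eq_j0j; move: ne_jj0; rewrite eq_j0j eqxx.
by rewrite big1 // => j _; case: eqP => // def_k; move: k1; rewrite def_k ffsum_delta eqxx.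
Qed.

End UnitMultiIndex.

Lemma sum_subnK n (f g : 'I_n -> nat) : (forall j, g j <= f j)%N ->
  (\sum_(j < n) (f j - g j) + \sum_(j < n) g j = \sum_(j < n) f j)%N.
Proof. by move=> le_gf; rewrite -big_split /=; apply: eq_bigr => j _; rewrite subnK. Qed.

Section WeylMonomials.
Variables (C : numClosedFieldType) (n : nat).
Local Notation WA := (WA C n).
Local Notation mon := 'X_{1..n + n}.
Local Notation aX := (@aX C n).
Local Notation wmulX := (@wmulX C n).
Implicit Types (m : mon) (a b : 'I_n -> nat).

Lemma alpha_mk a b j : alpha_of (mk a b) j = a j.
Proof. by rewrite /alpha_of mnmE (unsplitK (inl j)). Qed.

Lemma beta_mk a b j : beta_of (mk a b) j = b j.
Proof. by rewrite /beta_of mnmE (unsplitK (inr j)). Qed.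

Lemma eq_aX a a' b b' : a =1 a' -> b =1 b' -> aX a b = aX a' b'.
Proof.
by move=> eq_a eq_b; congr 'X_[_]; apply/mnmP => i; rewrite !mnmE; case: split.
Qed.

Lemma mdeg_alpha_beta m :
  mdeg m = (\sum_(j < n) alpha_of m j + \sum_(j < n) beta_of m j)%N.
Proof. by rewrite mdegE big_split_ord. Qed.

Lemma mdeg_mk a b : mdeg (mk a b) = (\sum_(j < n) a j + \sum_(j < n) b j)%N.
Proof.
by rewrite mdeg_alpha_beta; congr (_ + _)%N; apply: eq_bigr => j _;
  rewrite ?alpha_mk ?beta_mk.
Qed.

Lemma beta_le_mdeg m j : (beta_of m j <= mdeg m)%N.
Proof. by rewrite mdeg_alpha_beta [X in (_ + X)%N](bigD1 j) //= addnCA leq_addr. Qed.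

Lemma aX_prodX a b :
  aX a b = \prod_(j < n) ('X_(lshift n j) ^+ a j * 'X_(rshift n j) ^+ b j).
Proof.
rewrite /aX mpolyXE_id big_split_ord big_split /=.
by congr (_ * _); apply: eq_bigr => j _; congr (_ ^+ _); [exact: alpha_mk|exact: beta_mk].
Qed.

Definition wcoef (b a i : nat) : nat := ('C(b, i) * 'C(a, i) * i`!)%N.

Definition wcoefs m1 m2 N (k : {ffun 'I_n -> 'I_N}) : nat :=
  (\prod_(j < n) wcoef (beta_of m1 j) (alpha_of m2 j) (k j))%N.

Definition mcontract m1 m2 N (k : {ffun 'I_n -> 'I_N}) : WA :=
  aX (fun j => alpha_of m1 j + alpha_of m2 j - k j)%N
     (fun j => beta_of m1 j + beta_of m2 j - k j)%N.

Definition wterm m1 m2 N (k : {ffun 'I_n -> 'I_N}) : WA :=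
  (wcoefs m1 m2 k)%:R *: mcontract m1 m2 k.

Definition wfactor m1 m2 j (i : nat) : WA :=
  (wcoef (beta_of m1 j) (alpha_of m2 j) i)%:R *:
    ('X_(lshift n j) ^+ (alpha_of m1 j + alpha_of m2 j - i) *
     'X_(rshift n j) ^+ (beta_of m1 j + beta_of m2 j - i)).

Lemma wterm_prod m1 m2 N (k : {ffun 'I_n -> 'I_N}) :
  wterm m1 m2 k = \prod_(j < n) wfactor m1 m2 j (k j).
Proof. by rewrite /wterm /wfactor scaler_prod natr_prod /mcontract aX_prodX. Qed.

Lemma sum_wterm m1 m2 N : (mdeg m1 < N)%N ->
  \sum_(k : {ffun 'I_n -> 'I_N}) wterm m1 m2 k =
  \prod_(j < n) \sum_(i < (beta_of m1 j).+1) wfactor m1 m2 j i.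
Proof.
move=> lt_m1N; under eq_bigr do rewrite wterm_prod.
rewrite -(bigA_distr_bigA (fun j (i : 'I_N) => wfactor m1 m2 j i)) /=.
apply: eq_bigr => j _; apply: big_ord_trunc.
  exact: leq_ltn_trans (beta_le_mdeg m1 j) lt_m1N.
by move=> i lt_bi; rewrite /wfactor /wcoef bin_small // !mul0n scale0r.
Qed.

(* The index bound [mdeg m1] in the definition of [wmulX] is arbitrary:
   the binomial [C(beta, k)] kills every larger contraction. *)
Lemma wmulX_widen m1 m2 N : (mdeg m1 < N)%N ->
  wmulX m1 m2 = \sum_(k : {ffun 'I_n -> 'I_N}) wterm m1 m2 k.
Proof. by move=> lt_m1N; rewrite sum_wterm // -(sum_wterm m2 (ltnSn (mdeg m1))). Qed.

Lemma wcoefs_gt0 m1 m2 N (k : {ffun 'I_n -> 'I_N}) : (0 < wcoefs m1 m2 k)%N ->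
  forall j, (k j <= beta_of m1 j)%N /\ (k j <= alpha_of m2 j)%N.
Proof.
move=> gt0 j; have := @gt0_prodn _ _ _ gt0 j isT; rewrite /wcoef !muln_gt0 !bin_gt0.
by case/andP => /andP[-> ->].
Qed.

Definition mcharge m (j : 'I_n) : int := (alpha_of m j)%:Z - (beta_of m j)%:Z.

Lemma mdeg_mcontract m1 m2 N (k : {ffun 'I_n -> 'I_N}) m :
  (forall j, k j <= alpha_of m1 j + alpha_of m2 j /\ k j <= beta_of m1 j + beta_of m2 j)%N ->
  m \in msupp (mcontract m1 m2 k) ->
  (mdeg m + 2 * \sum_(j < n) k j = mdeg m1 + mdeg m2)%N /\
  forall j, mcharge m j = mcharge m1 j + mcharge m2 j.
Proof.
move=> le_k; rewrite msuppX inE => /eqP ->; split => [|j].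
  rewrite mdeg_mk !mdeg_alpha_beta.
  have := sum_subnK (fun j => proj1 (le_k j)); have := sum_subnK (fun j => proj2 (le_k j)).
  rewrite !big_split /=; set s := (\sum_(_ < _) _)%N; lia.
by rewrite /mcharge alpha_mk beta_mk; case: (le_k j); lia.
Qed.

Definition wcommX m1 m2 : WA := wmulX m1 m2 - wmulX m2 m1.

Definition cterm m1 m2 N (k : {ffun 'I_n -> 'I_N}) : WA :=
  ((wcoefs m1 m2 k)%:R - (wcoefs m2 m1 k)%:R) *: mcontract m1 m2 k.

Lemma wcommX_sum m1 m2 K : (mdeg m1 + mdeg m2 < K.+2)%N ->
  wcommX m1 m2 = \sum_(k : {ffun 'I_n -> 'I_K.+2}) cterm m1 m2 k.
Proof.
move=> lt_K; rewrite /wcommX (@wmulX_widen m1 m2 K.+2); last by lia.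
rewrite (@wmulX_widen m2 m1 K.+2); last by lia.
rewrite -sumrB; apply: eq_bigr => k _; rewrite /wterm /cterm scalerBl.
by congr (_ - _ *: _); apply: eq_aX => j; rewrite addnC.
Qed.

(* The single-contraction part of the commutator: the Poisson bracket. *)
Definition poissonX m1 m2 : WA :=
  \sum_(j < n) ((beta_of m1 j * alpha_of m2 j)%N%:R - (beta_of m2 j * alpha_of m1 j)%N%:R) *:
    aX (fun i => alpha_of m1 i + alpha_of m2 i - (i == j))%N
       (fun i => beta_of m1 i + beta_of m2 i - (i == j))%N.

Lemma wcoefs_delta m1 m2 K j :
  wcoefs m1 m2 (@ffdelta n K j) = (beta_of m1 j * alpha_of m2 j)%N.
Proof.
rewrite /wcoefs (bigD1 j) //= ffdeltaE eqxx /wcoef !bin1 muln1 big1 ?muln1 // => i ne_ij.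
by rewrite ffdeltaE (negbTE ne_ij) !bin0.
Qed.

Lemma poissonX_sum m1 m2 K :
  poissonX m1 m2 = \sum_(k : {ffun 'I_n -> 'I_K.+2} | ffsum k == 1%N) cterm m1 m2 k.
Proof.
rewrite sum_ffsum1; apply: eq_bigr => j _; rewrite /cterm !wcoefs_delta.
by congr (_ *: _); apply: eq_aX => i; rewrite ffdeltaE.
Qed.

Lemma cterm_supp m1 m2 K (k : {ffun 'I_n -> 'I_K.+2}) :
  allm (fun m => (mdeg m + 2 * ffsum k == mdeg m1 + mdeg m2)%N &&
                 [forall j, mcharge m j == mcharge m1 j + mcharge m2 j])
       (cterm m1 m2 k).
Proof.
have [eq_c|ne_c] := eqVneq (wcoefs m1 m2 k) (wcoefs m2 m1 k).
  by rewrite /cterm eq_c subrr scale0r; apply: allm0.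
have pos : (0 < wcoefs m1 m2 k)%N \/ (0 < wcoefs m2 m1 k)%N.
  by move: ne_c; case: (wcoefs m1 m2 k) => [|?]; case: (wcoefs m2 m1 k) => [|?]; auto.
have le_k j : (k j <= alpha_of m1 j + alpha_of m2 j /\ k j <= beta_of m1 j + beta_of m2 j)%N.
  by case: pos => /wcoefs_gt0 /(_ j) []; lia.
move=> m /msuppZ_le /(mdeg_mcontract le_k) [deg_m charge_m].
by rewrite deg_m eqxx; apply/forallP => j; rewrite charge_m.
Qed.

Lemma poissonX_supp m1 m2 :
  allm (fun m => (mdeg m + 2 == mdeg m1 + mdeg m2)%N &&
                 [forall j, mcharge m j == mcharge m1 j + mcharge m2 j])
       (poissonX m1 m2).
Proof.
by rewrite (poissonX_sum m1 m2 0); apply: allm_sum => k /eqP k1 m /cterm_supp; rewrite k1.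
Qed.

Lemma wcommX_sub_poissonX_supp m1 m2 :
  allm (fun m => mdeg m + 4 <= mdeg m1 + mdeg m2)%N (wcommX m1 m2 - poissonX m1 m2).
Proof.
rewrite (@wcommX_sum m1 m2 (mdeg m1 + mdeg m2)) // (bigID (fun k => ffsum k == 1%N)) /=.
rewrite -poissonX_sum addrAC subrr add0r.
apply: allm_sum => k k_neq1.
have [k0|k_neq0] := eqVneq (ffsum k) 0%N.
  suff wcoefs1 m m' : wcoefs m m' k = 1%N by rewrite /cterm !wcoefs1 subrr scale0r; apply: allm0.
  move/eqP: k0; rewrite sum_nat_eq0 => /forallP k0.
  by rewrite /wcoefs big1 // => j _; move/eqP: (k0 j) => ->; rewrite /wcoef !bin0.
by move=> m /cterm_supp /andP[/eqP deg_m _]; lia.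
Qed.

Lemma wcommX_supp m1 m2 :
  allm (fun m => mdeg m + 2 <= mdeg m1 + mdeg m2)%N (wcommX m1 m2).
Proof.
rewrite -[wcommX m1 m2](subrK (poissonX m1 m2)) addrC; apply: allmD.
  by move=> m /poissonX_supp /andP[/eqP <- _].
by move=> m /wcommX_sub_poissonX_supp; lia.
Qed.

End WeylMonomials.

Section TopDegree.
Variables (C : numClosedFieldType) (n : nat).
Local Notation WA := (WA C n).
Local Notation wcommX := (@wcommX C n).
Local Notation poissonX := (@poissonX C n).
Implicit Types (p q P Q : WA).

Local Notation poisson := (mbil poissonX).

Lemma wcommE p q : wcomm p q = mbil wcommX p q.
Proof.
have wmulE p' q' : wmul p' q' = mbil (@wmulX C n) p' q'.
  rewrite /wmul /mbil /mlin; apply: eq_bigr => m1 _; rewrite scaler_sumr.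
  by apply: eq_bigr => m2 _; rewrite scalerA.
by rewrite /wcomm !wmulE [mbil _ q p]mbilC -mbilFB.
Qed.

Definition mhomog d p := allm (fun m => mdeg m == d) p.
Definition lowdeg d p := allm (fun m => mdeg m < d)%N p.

Definition top_part d p P := mhomog d P /\ lowdeg d (p - P).

Lemma top_part_refl d P : mhomog d P -> top_part d P P.
Proof. by split; rewrite ?subrr; [|apply: allm0]. Qed.

Lemma mhomog_poisson d1 d2 P Q :
  mhomog d1 P -> mhomog d2 Q -> mhomog (d1 + d2 - 2)%N (poisson P Q).
Proof.
move=> homP homQ; apply: allm_mbil => m1 m2 /homP /eqP deg1 /homQ /eqP deg2.
by move=> m /poissonX_supp /andP[/eqP deg_m _]; apply/eqP; lia.
Qed.

Lemma top_part_le d p P : top_part d p P -> allm (fun m => mdeg m <= d)%N p.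
Proof.
case=> homP low; rewrite -[p](subrK P); apply: allmD => m.
  by move/low/ltnW.
by move/homP/eqP ->.
Qed.

Lemma top_part_wcomm d1 d2 p P q Q : top_part d1 p P -> top_part d2 q Q ->
  top_part (d1 + d2 - 2)%N (wcomm p q) (poisson P Q).
Proof.
move=> topP topQ; split; first exact: mhomog_poisson topP.1 topQ.1.
have le_q := top_part_le topQ; case: topP topQ => homP lowP [homQ lowQ].
have -> : wcomm p q - poisson P Q =
    mbil (fun a b => wcommX a b - poissonX a b) P Q +
    mbil wcommX P (q - Q) + mbil wcommX (p - P) q.
  rewrite (mbilFB wcommX poissonX) wcommE.
  by rewrite !(mbilDr, mbilNr, mbilDl, mbilNl); ring.
apply: allmD; first apply: allmD.
- apply: allm_mbil => m1 m2 /homP /eqP deg1 /homQ /eqP deg2 m.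
  by move/wcommX_sub_poissonX_supp; lia.
- apply: allm_mbil => m1 m2 /homP /eqP deg1 /lowQ deg2 m.
  by move/wcommX_supp; lia.
- apply: allm_mbil => m1 m2 /lowP deg1 /le_q deg2 m.
  by move/wcommX_supp; lia.
Qed.

Lemma wdeg_top_part d p P : top_part d p P -> P != 0 -> wdeg p = Some d.
Proof.
move=> topP P0; have le_p := top_part_le topP; case: topP => homP lowP.
have P_m := mlead_supp P0; set m := mlead P in P_m.
have /eqP deg_m := homP _ P_m.
have p_m : p@_m != 0.
  have : (p - P)@_m = 0 by apply: memN_msupp_eq0; apply/negP => /lowP; rewrite deg_m ltnn.
  by rewrite mcoeffB => /eqP; rewrite subr_eq0 => /eqP ->; rewrite -mcoeff_msupp.
have p0 : p != 0 by apply: contraNneq p_m => ->; rewrite mcoeff0.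
rewrite /wdeg (negbTE p0); congr Some; apply/eqP; rewrite eqn_leq.
have := msize_mdeg_lt (p := p) (m := m); rewrite mcoeff_msupp p_m deg_m => /(_ isT).
have : (msize p <= d.+1)%N by rewrite msizeE; apply/bigmax_leqP_seq => m' /le_p.
lia.
Qed.

End TopDegree.

Section PoissonChain.
Variables (C : numClosedFieldType) (n : nat).
Local Notation WA := (WA C n).
Local Notation aX := (@aX C n).
Local Notation poissonX := (@poissonX C n).
Local Notation poisson := (mbil poissonX).
Implicit Types (P Q : WA) (a b : 'I_n -> nat).

Lemma poissonXC m1 m2 : poissonX m2 m1 = - poissonX m1 m2.
Proof.
rewrite /poissonX -sumrN; apply: eq_bigr => j _; rewrite -scaleNr opprB.
by congr (_ *: _); apply: eq_aX => i; rewrite addnC.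
Qed.

Lemma poissonC P Q : poisson Q P = - poisson P Q.
Proof.
by rewrite mbilC -mbilFN; apply: eq_mbil => m1 m2; rewrite poissonXC.
Qed.

Lemma poisson_self P : poisson P P = 0.
Proof.
have /eqP : (2%:R : C) *: poisson P P = 0 by rewrite scaler_nat mulr2n {1}poissonC addNr.
by rewrite scaler_eq0 pnatr_eq0 => /eqP.
Qed.

Lemma dagger_aX a b : dagger (aX a b) = aX b a.
Proof.
rewrite /dagger /aX msuppX big_seq1 mcoeffX eqxx conjC1 scale1r.
by apply: eq_aX => j; rewrite ?alpha_mk ?beta_mk.
Qed.

Definition ptop (uv : WA * WA) : WA := 'i *: (uv.2 + uv.1).
Definition mtop (uv : WA * WA) : WA := uv.2 - uv.1.

Lemma poisson_ptop_mtop uv : poisson (ptop uv) (mtop uv) = ('i *+ 2) *: poisson uv.1 uv.2.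
Proof.
rewrite /ptop /mtop mbilZl !(mbilDl, mbilDr, mbilNr).
by rewrite !poisson_self (poissonC uv.1) subr0 sub0r opprK mulr2n scalerDl scalerDr.
Qed.

Variables (al be : 'I_n -> nat).

(* By bilinearity, the Poisson chain started at [(i (V + U), V - U)] is the image
   under [ptop] and [mtop] of this chain started at [(U, V)]. *)
Fixpoint uvchain (l : nat) : WA * WA :=
  if l is l'.+1 then
    let uv := uvchain l' in
    let c := poisson (ptop uv) (mtop uv) in (poisson uv.1 c, poisson uv.2 c)
  else (aX al be, aX be al).

Definition chain_deg (d l : nat) : nat := (3 ^ l * (d - 2) + 2)%N.

Lemma top_part_ychain d : (2 <= d)%N ->
  mhomog d (aX al be) -> mhomog d (aX be al) ->
  forall l, let y := chain2 (gpm C true al be) (gpm C false al be) l in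
  top_part (chain_deg d l) y.1 (ptop (uvchain l)) /\
  top_part (chain_deg d l) y.2 (mtop (uvchain l)).
Proof.
move=> le2d homU homV; elim=> [|l IHl] /=.
  rewrite /chain_deg expn0 mul1n subnK // /gpm dagger_aX /ptop /mtop.
  by split; apply: top_part_refl; [apply/allmZ/allmD | apply: allmB].
case: (chain2 _ _ l) IHl => yp ym /= [topP topM].
have topC := top_part_wcomm topP topM.
have -> : chain_deg d l.+1 = (chain_deg d l + (chain_deg d l + chain_deg d l - 2) - 2)%N.
  by rewrite /chain_deg expnS -mulnA; set t := (3 ^ l * (d - 2))%N; lia.
set c := poisson (ptop _) (mtop _).
have -> : ptop (poisson (uvchain l).1 c, poisson (uvchain l).2 c) = poisson (ptop (uvchain l)) c.
  by rewrite /ptop /= mbilZl mbilDl.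
have -> : mtop (poisson (uvchain l).1 c, poisson (uvchain l).2 c) = poisson (mtop (uvchain l)) c.
  by rewrite /mtop /= mbilDl mbilNl.
by split; apply: top_part_wcomm.
Qed.

End PoissonChain.

Section Charges.
Variables (C : numClosedFieldType) (n : nat).
Local Notation WA := (WA C n).
Local Notation aX := (@aX C n).
Local Notation poisson := (mbil (@poissonX C n)).
Implicit Types (c : 'I_n -> int) (p q u v : WA).

Definition charged c p := allm (fun m => [forall j, mcharge m j == c j]) p.

Lemma charged_aX (a b : 'I_n -> nat) : charged (fun j => (a j)%:Z - (b j)%:Z) (aX a b).
Proof.
move=> m; rewrite msuppX inE => /eqP ->; apply/forallP => j.
by rewrite /mcharge alpha_mk beta_mk.
Qed.

Lemma eq_charged c c' p : c =1 c' -> charged c p -> charged c' p.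
Proof.
by move=> eq_c chp m /chp /forallP ch_m; apply/forallP => j; rewrite -eq_c ch_m.
Qed.

Lemma charged_poisson c1 c2 P Q : charged c1 P -> charged c2 Q ->
  charged (fun j => c1 j + c2 j) (poisson P Q).
Proof.
move=> chP chQ; apply: allm_mbil => m1 m2 /chP /forallP ch1 /chQ /forallP ch2 m.
move=> /poissonX_supp /andP[_ /forallP ch]; apply/forallP => j.
by rewrite (eqP (ch j)) (eqP (ch1 j)) (eqP (ch2 j)).
Qed.

Lemma charged_poisson0 c P Q : charged c P -> charged (fun=> 0) Q -> charged c (poisson P Q).
Proof. by move=> chP chQ; apply: eq_charged _ (charged_poisson chP chQ) => j /=; rewrite addr0. Qed.

Lemma charged_beta c p m : charged c p -> m \in msupp p ->
  forall j, (beta_of m j)%:R = (alpha_of m j)%:R - (c j)%:~R :> C.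
Proof.
move=> chp /chp /forallP ch j; rewrite -(eqP (ch j)) /mcharge.
by rewrite rmorphB /= opprB addrCA subrr addr0.
Qed.

(* [u] and [v] have disjoint supports. *)
Lemma charged_addZ_neq0 c c' u v x : charged c u -> charged c' v -> (exists j, c j != c' j) ->
  u != 0 -> x != 0 -> v + x *: u != 0.
Proof.
move=> chu chv [j ne_c] u0 x0.
have u_m := mlead_supp u0; set m := mlead u in u_m.
have v_m : v@_m = 0.
  apply: memN_msupp_eq0; apply/negP => /chv /forallP /(_ j) /eqP ch_v.
  by move: (chu _ u_m) => /forallP /(_ j); rewrite ch_v eq_sym (negbTE ne_c).
apply/eqP => /(congr1 (mcoeff m)); rewrite mcoeffD mcoeffZ v_m add0r mcoeff0 => /eqP.
by rewrite mulf_eq0 (negbTE x0) /=; apply/negP; rewrite -mcoeff_msupp u_m.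
Qed.

Lemma charged_ptop_mtop c (uv : WA * WA) :
  charged c uv.1 -> charged (fun j => - c j) uv.2 ->
  charged (fun=> 0) (poisson (ptop uv) (mtop uv)).
Proof.
move=> chu chv; rewrite poisson_ptop_mtop; apply/allmZ.
by apply: eq_charged _ (charged_poisson chu chv) => j; rewrite subrr.
Qed.

Variables (al be : 'I_n -> nat).

Definition gcharge (j : 'I_n) : int := (al j)%:Z - (be j)%:Z.

Lemma charged_uvchain l :
  charged gcharge (uvchain C al be l).1 /\ charged (fun j => - gcharge j) (uvchain C al be l).2.
Proof.
elim: l => [|l [chu chv]] /=.
  split; first exact: charged_aX.
  by apply: eq_charged _ (charged_aX (a := be) (b := al)) => j; rewrite /gcharge opprB.
have chc := charged_ptop_mtop chu chv.
by split; [exact: charged_poisson0 chu chc|exact: charged_poisson0 chv chc].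
Qed.

Lemma ptop_mtop_neq0 l : ~ diag_idx al be -> (uvchain C al be l).1 != 0 ->
  ptop (uvchain C al be l) != 0 /\ mtop (uvchain C al be l) != 0.
Proof.
move=> ndiag u0; have [chu chv] := charged_uvchain l.
have ne_c : exists j, gcharge j != - gcharge j.
  apply/existsP; apply: contraT; rewrite negb_exists => /forallP eq_c; case: ndiag => j.
  by move: (eq_c j); rewrite negbK /gcharge; lia.
have top_neq0 x : x != 0 -> (uvchain C al be l).2 + x *: (uvchain C al be l).1 != 0.
  exact: charged_addZ_neq0 chu chv ne_c u0.
split; rewrite /ptop /mtop.
  by rewrite scaler_eq0 negb_or neq0Ci -[X in _ + X]scale1r top_neq0 ?oner_eq0.
by rewrite -scaleN1r top_neq0 ?oppr_eq0 ?oner_eq0.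
Qed.

End Charges.

Lemma deriv_prod_exp (R : comNzRingType) (I : eqType) (r : seq I) (F : I -> {poly R})
    (E : I -> nat) : uniq r ->
  (\prod_(i <- r) F i ^+ E i)^`() =
  \sum_(j <- r) (E j)%:R *: ((F j)^`() * \prod_(i <- r) F i ^+ (E i - (i == j))).
Proof.
elim: r => [|x r IHr] /=; first by rewrite !big_nil derivC.
case/andP => x_r uniq_r; rewrite !big_cons derivM deriv_exp IHr //.
have not_x i : i \in r -> (i == x) = false by move=> r_i; apply: contraNF x_r => /eqP <-.
have -> : \prod_(i <- r) F i ^+ (E i - (i == x)) = \prod_(i <- r) F i ^+ E i.
  by rewrite !big_seq; apply: eq_bigr => i r_i; rewrite not_x // subn0.
rewrite eqxx subn1; congr (_ + _); first by rewrite mulrnAl -mulrA scaler_nat.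
rewrite mulr_sumr !big_seq; apply: eq_bigr => j r_j.
by rewrite big_cons eq_sym not_x // subn0 -scalerAr mulrCA.
Qed.

Lemma predn_size_prod (R : idomainType) (I : eqType) (r : seq I) (F : I -> {poly R}) :
  (forall i, F i != 0) -> (size (\prod_(i <- r) F i)).-1 = (\sum_(i <- r) (size (F i)).-1)%N.
Proof.
move=> F_neq0; elim: r => [|x r IHr]; first by rewrite !big_nil size_poly1.
have prod_neq0 : \prod_(i <- r) F i != 0 by rewrite prodf_seq_neq0; apply/allP => i _ /=.
rewrite !big_cons size_mul // -IHr.
by move: (size_poly_gt0 (F x)) (size_poly_gt0 (\prod_(i <- r) F i)); rewrite F_neq0 prod_neq0; lia.
Qed.

Lemma size_deriv_char0 (R : numDomainType) (p : {poly R}) : size p^`() = (size p).-1.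
Proof.
have [le_p1|lt_1p] := leqP (size p) 1.
  by rewrite [p]size1_polyC // derivC size_poly0 size_polyC; case: (_ != _).
have sizeE : (size p).-2.+1 = (size p).-1 by case: (size p) lt_1p => [|[|s]].
rewrite /deriv size_poly_eq // sizeE -/(lead_coef p) mulrn_eq0 negb_or lead_coef_eq0.
by rewrite -size_poly_eq0; case: (size p) lt_1p => [|[|s]].
Qed.

Lemma scaleX_add1_neq0 (R : idomainType) (c : R) : c *: 'X + 1 != 0.
Proof.
apply/eqP => /(congr1 (horner^~ 0)) /eqP.
by rewrite hornerD hornerZ hornerX hornerC mulr0 add0r horner0 oner_eq0.
Qed.

Lemma size_scaleX_add1 (R : idomainType) (c : R) : (size (c *: 'X + 1)).-1 = (c != 0).
Proof.
have [->|c0] := eqVneq c 0; first by rewrite scale0r add0r size_poly1.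
by rewrite size_polyDl size_scale ?size_polyX ?size_poly1.
Qed.

Section Specialization.
Variables (C : numClosedFieldType) (n : nat) (d : 'I_n -> C).
Local Notation WA := (WA C n).
Local Notation mon := 'X_{1..n + n}.
Local Notation aX := (@aX C n).
Local Notation poissonX := (@poissonX C n).
Local Notation poisson := (mbil poissonX).
Implicit Types (a b : 'I_n -> nat) (m : mon) (x y : {poly C}).

Definition specX a : {poly C} := \prod_(j < n) (d j *: 'X + 1) ^+ a j.

Local Notation spec := (mlin (fun m => specX (alpha_of m))).

Lemma spec_aX a b : spec (aX a b) = specX a.
Proof. by rewrite mlinX; apply: eq_bigr => j _; rewrite alpha_mk. Qed.

Lemma specX_neq0 a : specX a != 0.
Proof. by apply/prodf_neq0 => j _; rewrite expf_neq0 ?scaleX_add1_neq0. Qed.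

Lemma spec_mlin (G : mon -> WA) (p : WA) : spec (mlin G p) = mlin (fun m => spec (G m)) p.
Proof. exact: mlin_morph (mlinD _) (mlinZ _). Qed.

Lemma specXD a b : specX (fun j => a j + b j)%N = specX a * specX b.
Proof. by rewrite /specX -big_split; apply: eq_bigr => j _; rewrite exprD. Qed.

Lemma deriv_specX a :
  (specX a)^`() = \sum_(j < n) ((a j)%:R * d j) *: specX (fun i => a i - (i == j))%N.
Proof.
rewrite /specX deriv_prod_exp ?index_enum_uniq //; apply: eq_bigr => j _.
by rewrite derivD derivZ derivX derivC addr0 alg_polyC mul_polyC scalerA.
Qed.

Lemma specX_subl a b j (c : C) :
  ((a j)%:R * c) *: (specX (fun i => a i - (i == j))%N * specX b) =
  ((a j)%:R * c) *: specX (fun i => a i + b i - (i == j))%N.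
Proof.
have [->|aj_gt0] := posnP (a j); first by rewrite mul0r !scale0r.
rewrite -specXD; congr (_ *: _); apply: eq_bigr => i _; congr (_ ^+ _).
by case: (eqVneq i j) => [->|_] /=; rewrite ?subn0 //; lia.
Qed.

Lemma specX_subr a b j (c : C) :
  ((b j)%:R * c) *: (specX a * specX (fun i => b i - (i == j))%N) =
  ((b j)%:R * c) *: specX (fun i => a i + b i - (i == j))%N.
Proof.
rewrite [specX a * _]mulrC specX_subl; congr (_ *: _); apply: eq_bigr => i _.
by rewrite addnC.
Qed.

Definition wbracket (e1 e2 : C) x y : {poly C} := e2 *: (x^`() * y) - e1 *: (x * y^`()).

Lemma wbracket_linearl e1 e2 y :
  {morph wbracket e1 e2 ^~ y : x1 x2 / x1 + x2} /\
  forall c x, wbracket e1 e2 (c *: x) y = c *: wbracket e1 e2 x y.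
Proof.
split=> [x1 x2|c x]; rewrite /wbracket.
  by rewrite derivD !mulrDl !scalerDr opprD addrACA.
by rewrite derivZ -!scalerAl !scalerA (mulrC e2) (mulrC e1) -!scalerA scalerBr.
Qed.

Lemma wbracket_linearr e1 e2 x :
  {morph wbracket e1 e2 x : y1 y2 / y1 + y2} /\
  forall c y, wbracket e1 e2 x (c *: y) = c *: wbracket e1 e2 x y.
Proof.
split=> [y1 y2|c y]; rewrite /wbracket.
  by rewrite derivD !mulrDr !scalerDr opprD addrACA.
by rewrite derivZ -!scalerAr !scalerA (mulrC e2) (mulrC e1) -!scalerA scalerBr.
Qed.

(* The hypotheses say that [m1] and [m2] have charges [e1 d] and [e2 d]. *)
Lemma spec_poissonX m1 m2 (e1 e2 : C) :
  (forall j, (beta_of m1 j)%:R = (alpha_of m1 j)%:R - e1 * d j :> C) ->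
  (forall j, (beta_of m2 j)%:R = (alpha_of m2 j)%:R - e2 * d j :> C) ->
  spec (poissonX m1 m2) = wbracket e1 e2 (specX (alpha_of m1)) (specX (alpha_of m2)).
Proof.
move=> beta1 beta2.
rewrite mlin_sum /wbracket !deriv_specX mulr_suml mulr_sumr !scaler_sumr -sumrB.
apply: eq_bigr => j _; rewrite mlinZ spec_aX.
rewrite -scalerAl -scalerAr specX_subl specX_subr !scalerA -scalerBl.
by congr (_ *: _); rewrite !natrM beta1 beta2; ring.
Qed.

Lemma spec_poisson c1 c2 (e1 e2 : C) (P Q : WA) : charged c1 P -> charged c2 Q ->
  (forall j, (c1 j)%:~R = e1 * d j) -> (forall j, (c2 j)%:~R = e2 * d j) ->
  spec (poisson P Q) = wbracket e1 e2 (spec P) (spec Q).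
Proof.
move=> chP chQ dc1 dc2; have [wDl wZl] := wbracket_linearl e1 e2 (spec Q).
rewrite spec_mlin (mlin_morph _ _ wDl wZl); apply: eq_mlin => m1 P_m1.
have [wDr wZr] := wbracket_linearr e1 e2 (specX (alpha_of m1)).
rewrite spec_mlin (mlin_morph _ _ wDr wZr); apply: eq_mlin => m2 Q_m2.
by apply: spec_poissonX => j; rewrite ?(charged_beta chP P_m1) ?(charged_beta chQ Q_m2) ?dc1 ?dc2.
Qed.

End Specialization.

(* One step of the specialised chain: [w] is, up to a nonzero factor, the second
   derivative of [u v], so [deg (u v)] goes to [3 deg (u v) - 4]. *)
Lemma size_chain_step (R : numDomainType) (u v : {poly R}) (k : R) :
  k != 0 -> u != 0 -> v != 0 -> (3 <= size (u * v)%R)%N ->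
  let w := (k *: (u * v)^`())^`() in
  [/\ u * w != 0, v * w != 0 & (3 <= size ((u * w) * (v * w))%R)%N].
Proof.
move=> k0 u0 v0 size_uv w.
have size_w : size w = (size (u * v)).-2 by rewrite /w derivZ size_scale // !size_deriv_char0.
have w0 : w != 0 by rewrite -size_poly_gt0 size_w; case: (size (u * v)) size_uv => [|[|[|]]].
have uw0 : u * w != 0 by rewrite mulf_neq0.
have vw0 : v * w != 0 by rewrite mulf_neq0.
split => //; rewrite !size_mul //; move: size_uv size_w; rewrite size_mul //.
move: (size_poly_gt0 u) (size_poly_gt0 v) (size_poly_gt0 w); rewrite u0 v0 w0.
by clearbody w; move: (size u) (size v) (size w); lia.
Qed.

Section Nonvanishing.
Variables (C : numClosedFieldType) (n : nat) (al be : 'I_n -> nat).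
Local Notation poisson := (mbil (@poissonX C n)).
Local Notation uvchain := (uvchain C al be).
Local Notation d := (fun j => (gcharge al be j)%:~R : C).
Local Notation specX := (specX d).
Local Notation spec := (mlin (fun m => specX (alpha_of m))).

Lemma size_specX a : (size (specX a)).-1 = (\sum_(j < n) (al j != be j) * a j)%N.
Proof.
rewrite predn_size_prod => [|j]; last exact/expf_neq0/scaleX_add1_neq0.
apply: eq_bigr => j _; rewrite size_exp size_scaleX_add1 intr_eq0 subr_eq0.
by rewrite eqz_nat.
Qed.

Lemma spec_uvchain l : (2 <= \sum_(j < n) (al j != be j) * (al j + be j))%N ->
  [/\ spec (uvchain l).1 != 0, spec (uvchain l).2 != 0 &
      (3 <= size (spec (uvchain l).1 * spec (uvchain l).2)%R)%N].
Proof.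
move=> weight2; elim: l => [|l [u0 v0 size_uv]].
  rewrite /= !spec_aX -specXD; split; rewrite ?specX_neq0 //.
  by move: (size_specX (fun j => al j + be j)%N) weight2; case: size => //= s; lia.
have [chu chv] := charged_uvchain C al be l.
set u := spec (uvchain l).1 in u0 v0 size_uv *; set v := spec (uvchain l).2 in u0 v0 size_uv *.
have d1 j : (gcharge al be j)%:~R = 1 * d j by rewrite mul1r.
have dN1 j : (- gcharge al be j)%:~R = -1 * d j by rewrite mulN1r rmorphN.
have d0 j : ((fun=> 0%R) j)%:~R = 0 * d j :> C by rewrite mul0r.
have chc := charged_ptop_mtop chu chv.
have spec_c : spec (poisson (ptop (uvchain l)) (mtop (uvchain l))) = - ('i *+ 2) *: (u * v)^`().
  rewrite poisson_ptop_mtop mlinZ (spec_poisson chu chv d1 dN1) /wbracket derivM -/u -/v.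
  by rewrite scaleN1r scale1r -opprD scaleNr scalerN.
have k0 : - ('i *+ 2) != 0 :> C by rewrite oppr_eq0 mulrn_eq0 negb_or neq0Ci.
have [] := size_chain_step k0 u0 v0 size_uv.
rewrite /= (spec_poisson chu chc d1 d0) (spec_poisson chv chc dN1 d0) spec_c /wbracket.
by rewrite !scale0r !sub0r scale1r scaleN1r opprK mulNr !oppr_eq0 size_polyN.
Qed.

End Nonvanishing.

Section PerpIndices.
Variables (n : nat) (a b : 'I_n -> nat).
Hypothesis perp : in_Aperp a b.

Lemma gsize_split : gsize a b = (\sum_(j < n) a j + \sum_(j < n) b j)%N.
Proof. by rewrite /gsize big_split. Qed.

Lemma gsizeC : gsize b a = gsize a b.
Proof. by rewrite /gsize; apply: eq_bigr => j _; rewrite addnC. Qed.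

Lemma in_Aperp_not_diag : ~ diag_idx a b.
Proof.
case: perp => notA0 [_ [_ [notAeq _]]] diag.
have : gsize a b = (\sum_(j < n) a j).*2.
  by rewrite gsize_split -addnn; congr (_ + _)%N; apply: eq_bigr => j _; rewrite diag.
have [le_s1|le2s] := leqP (\sum_(j < n) a j) 1 => size_ab.
  by apply: notA0; split => //; lia.
by apply: notAeq; split => //; lia.
Qed.

Lemma in_Aperp_gsize : (3 <= gsize a b)%N.
Proof.
case: perp => _ [notA1 [notA2 _]].
have : gsize a b != 0%N.
  apply/eqP => /eqP; rewrite /gsize sum_nat_eq0 => /forallP ab0; apply: in_Aperp_not_diag => j.
  by move: (ab0 j) => /=; rewrite addn_eq0 => /andP[/eqP -> /eqP ->].
have : gsize a b != 2%N.
  by apply/eqP => size2; apply: notA2; split; [|exact: in_Aperp_not_diag].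
by move: notA1; rewrite /in_A1; lia.
Qed.

(* Outside [\hat A_n^om], the indices with [a_j != b_j] carry total weight at least 2. *)
Lemma in_Aperp_offdiag_weight : (2 <= \sum_(j < n) (a j != b j) * (a j + b j))%N.
Proof.
case: perp => _ [_ [_ [_ notAom]]].
rewrite leqNgt; apply/negP => weight_lt2.
have [k ne_k] : exists k, a k != b k.
  apply/existsP; apply: contraT; rewrite negb_exists => /forallP eq_ab.
  by case: in_Aperp_not_diag => j; apply/eqP; rewrite -[_ == _]negbK eq_ab.
move: weight_lt2; rewrite (bigD1 k) //= ne_k mul1n; set r := (\sum_(_ < _ | _) _)%N => weight_lt2.
have size_k : (a k + b k = 1)%N by move: ne_k; lia.
have eq_off j : j != k -> a j = b j.
  move=> ne_jk; have : ((a j != b j) * (a j + b j) <= r)%N by rewrite /r (bigD1 j) //= leq_addr.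
  by case: eqVneq => // ne_ab; rewrite mul1n; lia.
apply: notAom; split; first exact: in_Aperp_gsize.
exists k; split => [//|k' [_ eq_off']]; apply/eqP; apply: contraT => ne_k'.
by move: ne_k; rewrite eq_off' ?eqxx // eq_sym.
Qed.

End PerpIndices.

Lemma mhomog_aX (C : numClosedFieldType) n (a b : 'I_n -> nat) :
  mhomog (gsize a b) (aX C a b).
Proof. by move=> m; rewrite msuppX inE => /eqP ->; rewrite mdeg_mk gsize_split. Qed.

Theorem theorem7 (C : numClosedFieldType) (n : nat) (hn : (1 <= n)%N)
    (alpha beta : 'I_n -> nat) (sigma : bool)
    (hge : lexge alpha beta)
    (hsig : sigma = false -> lexgt alpha beta)
    (hperp : in_Aperp alpha beta) :
  forall l : nat,
    wdeg (@ychain C n alpha beta sigma l)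
      = Some (3 ^ l * (gsize alpha beta - 2) + 2)%N
    /\ (3 ^ l + 2 <= 3 ^ l * (gsize alpha beta - 2) + 2)%N.
Proof.
(* The orderings [hge], [hsig] only single out a basis element; the degree
   count does not use them. *)
move=> l; have size3 := in_Aperp_gsize hperp.
split; last by rewrite leq_add2r leq_pmulr // subn_gt0.
have homU : mhomog (gsize alpha beta) (aX C alpha beta) by apply: mhomog_aX.
have homV : mhomog (gsize alpha beta) (aX C beta alpha) by rewrite -gsizeC; apply: mhomog_aX.
have [topP topM] := top_part_ychain (ltnW size3) homU homV l.
have [spec_u0 _ _] := spec_uvchain C l (in_Aperp_offdiag_weight hperp).
have u0 : (uvchain C alpha beta l).1 != 0 by apply: contraNneq spec_u0 => ->; rewrite mlin0.
have [ptop0 mtop0] := ptop_mtop_neq0 (in_Aperp_not_diag hperp) u0.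
rewrite /ychain; case: sigma {hsig}.
  exact: wdeg_top_part topP ptop0.
exact: wdeg_top_part topM mtop0.
Qed.
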